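(* Let $G$ be a graph on $V$ and $W\subseteq V$ reducible in $G$. Then there is an applicable combinatorial reduction strategy $(\gamma_1,\dots,\gamma_k)$ on $G$ with domain $W$ such that $\gamma_k\circ\cdots\circ\gamma_1(G)=\Gamma_W(G)$.
   Context: A graph means a finite simple graph in which loops are allowed, with adjacency matrix $A$ over $\mathbf F_2$ ($A_{vv}=1$ iff $v$ has a loop). Let $\mathcal V$ be the $\mathbf F_2$-vector space with basis $V$, $\mathcal E(x,y)=x^TAy$, $\langle W\rangle$ the span of $W$, $\langle W\rangle^{\perp\mathcal E}=\{x:\mathcal E(x,w)=0\ \forall w\in\langle W\rangle\}$. $W$ is reducible if $\langle W\rangle+\langle W\rangle^{\perp\mathcal E}=\mathcal V$; then $\mathcal E^W(x_1,x_2)=\mathcal E(x_1',x_2')$ with $x_i'\in\langle W\rangle^{\perp\mathcal E}$, $x_i-x_i'\in\langle W\rangle$, and $\Gamma_W(G)$ is the graph on $V\setminus W$ in which $v,w$ (possibly equal) are joined iff $\mathcal E^W(v,w)=1$. Combinatorial reduction rules (domain ordered first, $R$ the principal submatrix on the remaining vertices): $\mathrm{gpr}_v$ applies iff $v$ has a loop, $\begin{pmatrix}1&Q\\Q^T&R\end{pmatrix}\mapsto R-Q^TQ$; $\mathrm{gdr}_{v_1,v_2}$ applies iff $v_1,v_2$ are loopless and adjacent, $\begin{pmatrix}J&Q\\Q^T&R\end{pmatrix}\mapsto R-Q^TJQ$, $J=\begin{pmatrix}0&1\\1&0\end{pmatrix}$; $\mathrm{gnr}_v$ applies iff $v$ is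 loopless with no neighbors, $\begin{pmatrix}0&\mathbf 0\\ \mathbf 0^T&R\end{pmatrix}\mapsto R$. A combinatorial reduction strategy is a sequence $(\gamma_1,\dots,\gamma_k)$ of such rules; it is applicable to $G$ if each $\gamma_i$ applies to $\gamma_{i-1}\circ\cdots\circ\gamma_1(G)$; its domain is the set of all vertices removed. *)

From HB Require Import structures.
From mathcomp Require Import all_boot all_order all_algebra.
Set Implicit Arguments. Unset Strict Implicit. Unset Printing Implicit Defensive.
Import GRing.Theory.
Local Open Scope ring_scope.

(* A graph: a finite vertex set V together with an adjacency matrix over F_2
   (only entries indexed by V matter; A v v = 1 iff v has a loop). *)
Record graph (T : finType) := Graph { verts : {set T}; adj : T -> T -> 'F_2 }.

Definition sym_graph (T : finType) (G : graph T) : Prop :=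
  forall u v, u \in verts G -> v \in verts G -> adj G u v = adj G v u.

Definition graph_eq (T : finType) (G H : graph T) : Prop :=
  verts G = verts H /\
  forall u v, u \in verts G -> v \in verts G -> adj G u v = adj H u v.

(* F_2-vectors with coordinates indexed by T; the space with basis S is the set
   of vectors supported in S (this is exactly the span <S> of the basis vectors). *)
Definition vec (T : finType) := {ffun T -> 'F_2}.
Definition inspan (T : finType) (S : {set T}) (x : vec T) : bool :=
  [forall t, (t \notin S) ==> (x t == 0)].
Definition basisv (T : finType) (v : T) : vec T := [ffun t => (t == v)%:R].

Definition Eform (T : finType) (G : graph T) (x y : vec T) : 'F_2 :=
  \sum_(a : T) \sum_(b : T) x a * adj G a b * y b.

Definition perpE (T : finType) (G : graph T) (W : {set T}) (x : vec T) : bool :=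
  inspan (verts G) x && [forall w : vec T, inspan W w ==> (Eform G x w == 0)].

Definition reducible (T : finType) (G : graph T) (W : {set T}) : Prop :=
  forall z : vec T, inspan (verts G) z ->
    exists x y : vec T, [/\ inspan W x, perpE G W y & z = x + y].

Definition perp_part (T : finType) (G : graph T) (W : {set T}) (x : vec T) : vec T :=
  odflt 0 [pick x' : vec T | perpE G W x' && inspan W (x - x')].

Definition EW (T : finType) (G : graph T) (W : {set T}) (x1 x2 : vec T) : 'F_2 :=
  Eform G (perp_part G W x1) (perp_part G W x2).

Definition Gamma (T : finType) (G : graph T) (W : {set T}) : graph T :=
  Graph (verts G :\: W) (fun v w => EW G W (basisv v) (basisv w)).

Inductive rule (T : finType) :=
  | Gpr of T
  | Gdr of T & T
  | Gnr of T.

Definition rule_applies (T : finType) (G : graph T) (r : rule T) : Prop :=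
  match r with
  | Gpr v => v \in verts G /\ adj G v v = 1
  | Gdr v1 v2 => [/\ v1 \in verts G, v2 \in verts G, v1 <> v2,
                    adj G v1 v1 = 0 /\ adj G v2 v2 = 0 & adj G v1 v2 = 1]
  | Gnr v => [/\ v \in verts G, adj G v v = 0 &
               forall w, w \in verts G -> adj G v w = 0]
  end.

Definition rule_dom (T : finType) (r : rule T) : {set T} :=
  match r with
  | Gpr v => [set v]
  | Gdr v1 v2 => [set v1; v2]
  | Gnr v => [set v]
  end.

(* gpr: R - Q^T Q ; gdr: R - Q^T J Q ; gnr: R *)
Definition apply_rule (T : finType) (G : graph T) (r : rule T) : graph T :=
  match r with
  | Gpr v => Graph (verts G :\ v) (fun x y => adj G x y - adj G v x * adj G v y)
  | Gdr v1 v2 => Graph (verts G :\: [set v1; v2])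
      (fun x y => adj G x y - (adj G v1 x * adj G v2 y + adj G v2 x * adj G v1 y))
  | Gnr v => Graph (verts G :\ v) (adj G)
  end.

Fixpoint applicable (T : finType) (G : graph T) (s : seq (rule T)) : Prop :=
  match s with
  | [::] => True
  | r :: s' => rule_applies G r /\ applicable (apply_rule G r) s'
  end.

Fixpoint run (T : finType) (G : graph T) (s : seq (rule T)) : graph T :=
  match s with
  | [::] => G
  | r :: s' => run (apply_rule G r) s'
  end.

Definition strategy_dom (T : finType) (s : seq (rule T)) : {set T} :=
  \bigcup_(r <- s) rule_dom r.

From HB Require Import structures.
From mathcomp Require Import all_boot all_order all_algebra.
Set Implicit Arguments. Unset Strict Implicit. Unset Printing Implicit Defensive.
Import GRing.Theory.
Local Open Scope ring_scope.

(* A rule with domain D ⊆ W acts on the form exactly like Γ_D: the form of the reduced graph is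
   E evaluated on lifts of vectors into <D>^⊥ (by adding multiples of the basis vectors of D,
   which is possible thanks to the loop, resp. the loopless edge, resp. since there is nothing to
   correct for an isolated vertex). Reductions compose, Γ_{W∖D}(Γ_D G) = Γ_W G, and W∖D remains
   reducible in Γ_D G, because <D> ∩ <D>^⊥ lies in the radical of E. It remains to find one
   applicable rule inside a nonempty reducible W: a loop gives gpr, an edge gives gdr, and
   otherwise W is totally disconnected, so reducibility forces its vertices to be isolated in G
   and gnr applies. *)

Lemma pchar_F2 : (2 \in [pchar 'F_2])%N.
Proof. exact: pchar_Fp. Qed.

Lemma F2_eq1 (x : 'F_2) : x != 0 -> x = 1.
Proof. by case: x => -[|[|//]] ? ?; apply/val_inj. Qed.

Definition scalev (T : finType) (c : 'F_2) (x : vec T) : vec T := [ffun t => c * x t].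

Definition drop_coords (T : finType) (D : {set T}) (x : vec T) : vec T :=
  [ffun t => if t \in D then 0 else x t].

Section Spans.
Variable T : finType.
Implicit Types (x y : vec T) (S D : {set T}).

Lemma basisvE (v t : T) : basisv v t = (t == v)%:R.
Proof. by rewrite ffunE. Qed.

Lemma sum_basisv_mull (u : T) (F : T -> 'F_2) : \sum_a basisv u a * F a = F u.
Proof.
rewrite (bigD1 u) //= big1 => [|a /negbTE au]; first by rewrite basisvE eqxx mul1r addr0.
by rewrite basisvE au mul0r.
Qed.

Lemma sum_basisv_mulr (u : T) (F : T -> 'F_2) : \sum_a F a * basisv u a = F u.
Proof. by rewrite -[RHS](sum_basisv_mull u); apply: eq_bigr => a _; rewrite mulrC. Qed.

Lemma inspanP S x : reflect (forall t, t \notin S -> x t = 0) (inspan S x).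
Proof.
apply: (iffP forallP) => [xS t tS | xS t]; first exact/eqP/(implyP (xS t)).
by apply/implyP => /xS ->.
Qed.

Lemma inspan0 S : inspan S 0.
Proof. by apply/inspanP => t _; rewrite ffunE. Qed.

Lemma inspanD S x y : inspan S x -> inspan S y -> inspan S (x + y).
Proof. by move=> /inspanP xS /inspanP yS; apply/inspanP => t tS; rewrite ffunE xS ?yS ?addr0. Qed.

Lemma inspanN S x : inspan S x -> inspan S (- x).
Proof. by move=> /inspanP xS; apply/inspanP => t tS; rewrite ffunE xS ?oppr0. Qed.

Lemma inspanB S x y : inspan S x -> inspan S y -> inspan S (x - y).
Proof. by move=> xS /inspanN; apply: inspanD. Qed.

Lemma inspanZ S c x : inspan S x -> inspan S (scalev c x).
Proof. by move=> /inspanP xS; apply/inspanP => t tS; rewrite ffunE xS ?mulr0. Qed.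

Lemma inspanS S S' x : S \subset S' -> inspan S x -> inspan S' x.
Proof.
move=> sSS' /inspanP xS; apply/inspanP => t tS'.
by apply: xS; apply: contra tS'; apply: (subsetP sSS').
Qed.

Lemma inspan_basisv S v : v \in S -> inspan S (basisv v).
Proof.
by move=> vS; apply/inspanP => t tS; rewrite basisvE; case: eqP => // tv; rewrite tv vS in tS.
Qed.

Lemma drop_coordsD D x y : drop_coords D (x + y) = drop_coords D x + drop_coords D y.
Proof. by apply/ffunP => t; rewrite !ffunE; case: (t \in D); rewrite ?addr0. Qed.

Lemma drop_coordsB D x y : drop_coords D (x - y) = drop_coords D x - drop_coords D y.
Proof. by apply/ffunP => t; rewrite !ffunE; case: (t \in D); rewrite ?subr0. Qed.

Lemma drop_coords_id S D x : inspan (S :\: D) x -> drop_coords D x = x.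
Proof.
by move=> /inspanP xS; apply/ffunP => t; rewrite ffunE; case: ifP => // tD; rewrite xS // inE tD.
Qed.

Lemma inspan_drop_coords S D x : inspan S x -> inspan (S :\: D) (drop_coords D x).
Proof.
move=> /inspanP xS; apply/inspanP => t; rewrite inE negb_and negbK ffunE.
by case: ifP => // _ /xS.
Qed.

Lemma inspan_drop_coordsB D x : inspan D (drop_coords D x - x).
Proof. by apply/inspanP => t tD; rewrite !ffunE (negbTE tD) subrr. Qed.

End Spans.

Section Forms.
Variables (T : finType) (G : graph T).
Implicit Types (x y t : vec T) (D W : {set T}).
Local Notation V := (verts G).

Lemma EformEl x y : Eform G x y = \sum_a x a * \sum_b adj G a b * y b.
Proof. by apply: eq_bigr => a _; rewrite mulr_sumr; apply: eq_bigr => b _; rewrite mulrA. Qed.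

Lemma EformEr x y : Eform G x y = \sum_b (\sum_a x a * adj G a b) * y b.
Proof. by rewrite /Eform exchange_big; apply: eq_bigr => b _; rewrite mulr_suml. Qed.

Lemma EformDl x x' y : Eform G (x + x') y = Eform G x y + Eform G x' y.
Proof. by rewrite !EformEl -big_split; apply: eq_bigr => a _; rewrite ffunE mulrDl. Qed.

Lemma EformNl x y : Eform G (- x) y = - Eform G x y.
Proof. by rewrite !EformEl -sumrN; apply: eq_bigr => a _; rewrite ffunE mulNr. Qed.

Lemma EformBl x x' y : Eform G (x - x') y = Eform G x y - Eform G x' y.
Proof. by rewrite EformDl EformNl. Qed.

Lemma EformZl c x y : Eform G (scalev c x) y = c * Eform G x y.
Proof. by rewrite !EformEl mulr_sumr; apply: eq_bigr => a _; rewrite ffunE mulrA. Qed.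

Lemma EformDr x y y' : Eform G x (y + y') = Eform G x y + Eform G x y'.
Proof. by rewrite !EformEr -big_split; apply: eq_bigr => b _; rewrite ffunE mulrDr. Qed.

Lemma EformNr x y : Eform G x (- y) = - Eform G x y.
Proof. by rewrite !EformEr -sumrN; apply: eq_bigr => b _; rewrite ffunE mulrN. Qed.

Lemma EformBr x y y' : Eform G x (y - y') = Eform G x y - Eform G x y'.
Proof. by rewrite EformDr EformNr. Qed.

Lemma Eform_basisvl v y : Eform G (basisv v) y = \sum_b adj G v b * y b.
Proof. by rewrite EformEl sum_basisv_mull. Qed.

Lemma Eform_basisvr x v : Eform G x (basisv v) = \sum_a x a * adj G a v.
Proof. by rewrite EformEr sum_basisv_mulr. Qed.

Lemma Eform_basisv u v : Eform G (basisv u) (basisv v) = adj G u v.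
Proof. by rewrite Eform_basisvl sum_basisv_mulr. Qed.

Hypothesis symG : sym_graph G.

Lemma EformC x y : inspan V x -> inspan V y -> Eform G x y = Eform G y x.
Proof.
move=> /inspanP xV /inspanP yV; rewrite /Eform exchange_big.
apply: eq_bigr => a _; apply: eq_bigr => b _.
have [bV|/xV->] := boolP (b \in V); last by rewrite !mul0r mulr0.
have [aV|/yV->] := boolP (a \in V); last by rewrite mulr0 !mul0r.
by rewrite (symG bV aV) mulrC mulrA mulrAC.
Qed.

Lemma perpEP W y :
  reflect (inspan V y /\ forall w, inspan W w -> Eform G y w = 0) (perpE G W y).
Proof.
apply: (iffP andP) => -[yV yW]; split => //.
  by move=> w wW; apply/eqP/(implyP (forallP yW w)).
by apply/forallP => w; apply/implyP => /yW ->.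
Qed.

Lemma perpE_basisv D y :
  inspan V y -> (forall d, d \in D -> Eform G y (basisv d) = 0) -> perpE G D y.
Proof.
move=> yV yD; apply/perpEP; split => // w /inspanP wD.
rewrite EformEr big1 // => b _.
have [bD|/wD->] := boolP (b \in D); last by rewrite mulr0.
by rewrite -Eform_basisvr yD // mul0r.
Qed.

Lemma perpEB W y y' : perpE G W y -> perpE G W y' -> perpE G W (y - y').
Proof.
move=> /perpEP[yV yW] /perpEP[y'V y'W]; apply/perpEP; split; first exact: inspanB.
by move=> w wW; rewrite EformBl yW ?y'W ?subrr.
Qed.

Lemma perpES D W y : D \subset W -> perpE G W y -> perpE G D y.
Proof. by move=> sDW /perpEP[yV yW]; apply/perpEP; split => // w /(inspanS sDW)/yW. Qed.

Lemma reducible_radical D u t : D \subset V -> reducible G D ->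
  inspan D u -> perpE G D u -> inspan V t -> Eform G u t = 0.
Proof.
move=> sDV redD uD /perpEP[_ uperp] tV; have [x [z [xD zperp ->]]] := redD t tV.
move/perpEP: zperp => [zV zD]; rewrite EformDr uperp // add0r.
by rewrite EformC ?zD //; apply: inspanS uD.
Qed.

Lemma perp_part_spec W x x' : perpE G W x' -> inspan W (x - x') ->
  perpE G W (perp_part G W x) /\ inspan W (x - perp_part G W x).
Proof.
move=> x'perp xx'W; rewrite /perp_part; case: pickP => [x'' /andP[] //|none].
by have := none x'; rewrite x'perp xx'W.
Qed.

Lemma EW_perp W x y x' : W \subset V -> reducible G W -> inspan V y ->
  perpE G W x' -> inspan W (x - x') -> EW G W x y = Eform G x' y.
Proof.
move=> sWV redW yV x'perp xx'W.
have [xperp xW] := perp_part_spec x'perp xx'W.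
have [a [b [aW bperp ya]]] := redW y yV.
have [yperp yW] : perpE G W (perp_part G W y) /\ inspan W (y - perp_part G W y).
  by apply: (perp_part_spec bperp); rewrite ya addrK.
rewrite /EW; set px := perp_part G W x; set py := perp_part G W y.
have -> : py = y - (y - py) by rewrite opprB addrC subrK.
move/perpEP: (xperp) => [_ xperpW]; rewrite EformBr (xperpW _ yW) subr0.
apply/eqP; rewrite -subr_eq0 -EformBl; apply/eqP.
apply: (reducible_radical sWV redW) => //; last exact: perpEB.
have -> : px - x' = (x - x') - (x - px) by rewrite opprB [RHS]addrC addrA subrK.
exact: inspanB.
Qed.

End Forms.

Section ReductionStep.
Variables (T : finType) (G G' : graph T) (W D : {set T}) (p : vec T -> vec T).
Implicit Types (x y t : vec T).
Local Notation V := (verts G).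

Hypotheses (symG : sym_graph G) (sWV : W \subset V) (sDW : D \subset W).
Hypothesis redW : reducible G W.
Hypothesis vertsG' : verts G' = V :\: D.
Hypothesis lift_dom : forall x, inspan (V :\: D) x -> inspan D (p x - x).
Hypothesis lift_perp : forall x, inspan (V :\: D) x -> perpE G D (p x).
Hypothesis Eform_lift : forall x t, inspan (V :\: D) x -> Eform G' x t = Eform G (p x) t.

Let sDV : D \subset V. Proof. exact: subset_trans sWV. Qed.

Lemma reducible_step_dom : reducible G D.
Proof.
move=> z zV; set z' := drop_coords D z.
have z'VD : inspan (V :\: D) z' by apply: inspan_drop_coords.
exists (z - p z'), (p z'); split; [|exact: lift_perp | by rewrite subrK].
have -> : z - p z' = - (z' - z) - (p z' - z') by rewrite !opprB addrA subrK.
by apply: inspanB; [apply/inspanN/inspan_drop_coordsB | apply: lift_dom].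
Qed.

Lemma Eform_step_perp y t : perpE G W y -> inspan V t ->
  Eform G' (drop_coords D y) t = Eform G y t.
Proof.
move=> yperp tV; move/perpEP: (yperp) => [yV _]; set y' := drop_coords D y.
have y'VD : inspan (V :\: D) y' by apply: inspan_drop_coords.
rewrite Eform_lift //.
have -> : p y' = y + (p y' - y) by rewrite addrC subrK.
have liftD : inspan D (p y' - y).
  have -> : p y' - y = (p y' - y') + (y' - y) by rewrite addrA subrK.
  by apply: inspanD; [apply: lift_dom | apply: inspan_drop_coordsB].
have liftperp : perpE G D (p y' - y).
  by apply: perpEB; [apply: lift_perp | apply: perpES yperp].
by rewrite EformDl (reducible_radical symG sDV reducible_step_dom liftD liftperp tV) addr0.
Qed.

Lemma sym_step : sym_graph G'.
Proof.
have adj_lift a b : a \in V :\: D -> b \in V :\: D ->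
    adj G' a b = Eform G (p (basisv a)) (p (basisv b)).
  move=> aVD bVD; rewrite -Eform_basisv Eform_lift; last exact: inspan_basisv.
  have -> : p (basisv b) = basisv b + (p (basisv b) - basisv b) by rewrite addrC subrK.
  move/perpEP: (lift_perp (inspan_basisv aVD)) => [_ aperp].
  by rewrite EformDr (aperp _ (lift_dom (inspan_basisv bVD))) addr0.
move=> u v; rewrite vertsG' => uVD vVD; rewrite !adj_lift //.
by apply: EformC => //; [case/perpEP: (lift_perp (inspan_basisv uVD)) |
                         case/perpEP: (lift_perp (inspan_basisv vVD))].
Qed.

Lemma perpE_step y : perpE G W y -> perpE G' (W :\: D) (drop_coords D y).
Proof.
move=> yperp; move/perpEP: (yperp) => [yV yW]; apply/perpEP; split.
  by rewrite vertsG'; apply: inspan_drop_coords.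
move=> w wWD; rewrite Eform_step_perp //.
  by apply: yW; apply: inspanS wWD; apply: subsetDl.
by apply: inspanS wWD; apply: subset_trans sWV; apply: subsetDl.
Qed.

Lemma reducible_step : reducible G' (W :\: D).
Proof.
move=> z; rewrite vertsG' => zVD.
have [x [y [xW yperp ez]]] := redW (inspanS (subsetDl V D) zVD).
exists (drop_coords D x), (drop_coords D y); split.
- exact: inspan_drop_coords.
- exact: perpE_step.
- by rewrite -drop_coordsD -ez (drop_coords_id zVD).
Qed.

Lemma Gamma_step : graph_eq (Gamma G' (W :\: D)) (Gamma G W).
Proof.
have vertsE : (V :\: D) :\: (W :\: D) = V :\: W.
  apply/setP => t; rewrite !inE.
  by case: (boolP (t \in D)) => //= tD; rewrite (subsetP sDW t tD).
rewrite /Gamma /= vertsG' vertsE; split=> //= u v uVW vVW.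
have outW (a : T) : a \in V :\: W -> a \in V :\: D.
  by rewrite !inE => /andP[aW ->]; rewrite andbT; apply: contra aW; apply: (subsetP sDW).
have [uV vV] := (subsetP (subsetDl V W) u uVW, subsetP (subsetDl V W) v vVW).
have [a [y [aW yperp eu]]] := redW (inspan_basisv uV).
rewrite (EW_perp symG sWV redW (inspan_basisv vV) yperp); last by rewrite eu addrK.
have sWDV' : W :\: D \subset verts G' by rewrite vertsG'; apply: setSD.
have vV' : inspan (verts G') (basisv v) by rewrite vertsG'; apply/inspan_basisv/outW.
rewrite (EW_perp sym_step sWDV' reducible_step vV' (perpE_step yperp)).
  by rewrite Eform_step_perp //; apply: inspan_basisv.
have -> : basisv u - drop_coords D y = drop_coords D a.
  by rewrite -(drop_coords_id (inspan_basisv (outW u uVW))) -drop_coordsB eu addrK.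
exact: inspan_drop_coords.
Qed.

End ReductionStep.

Definition reduces_to (T : finType) (G : graph T) (D : {set T}) (G' : graph T) : Prop :=
  verts G' = verts G :\: D /\
  exists p : vec T -> vec T,
    [/\ forall x, inspan (verts G :\: D) x -> inspan D (p x - x),
        forall x, inspan (verts G :\: D) x -> perpE G D (p x) &
        forall x t, inspan (verts G :\: D) x -> Eform G' x t = Eform G (p x) t].

Lemma reduces_to_Gamma (T : finType) (G G' : graph T) (W D : {set T}) :
  sym_graph G -> W \subset verts G -> D \subset W -> reducible G W -> reduces_to G D G' ->
  [/\ sym_graph G', W :\: D \subset verts G', reducible G' (W :\: D) &
      graph_eq (Gamma G' (W :\: D)) (Gamma G W)].
Proof.
move=> symG sWV sDW redW [vertsG' [p [lift_dom lift_perp Eform_lift]]]; split.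
- exact: sym_step lift_dom lift_perp Eform_lift.
- by rewrite vertsG'; apply: setSD.
- exact: reducible_step lift_dom lift_perp Eform_lift.
- exact: Gamma_step lift_dom lift_perp Eform_lift.
Qed.

Section Rules.
Variables (T : finType) (G : graph T).
Implicit Types (x t : vec T).
Local Notation V := (verts G).
Hypothesis symG : sym_graph G.

Lemma Eform_adjB V' (h : T -> T -> 'F_2) x t :
  Eform (Graph V' (fun a b => adj G a b - h a b)) x t =
  Eform G x t - \sum_a \sum_b x a * h a b * t b.
Proof.
rewrite /Eform /= -sumrB; apply: eq_bigr => a _; rewrite -sumrB.
by apply: eq_bigr => b _; rewrite mulrBr mulrBl.
Qed.

Lemma sum_mul_outer x t (f g : T -> 'F_2) :
  \sum_a \sum_b x a * (f a * g b) * t b = (\sum_a f a * x a) * (\sum_b g b * t b).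
Proof.
rewrite mulr_suml; apply: eq_bigr => a _; rewrite mulr_sumr.
by apply: eq_bigr => b _; rewrite mulrCA !mulrA.
Qed.

Lemma sum_mul_outerD x t (f g f' g' : T -> 'F_2) :
  \sum_a \sum_b x a * (f a * g b + f' a * g' b) * t b =
  (\sum_a f a * x a) * (\sum_b g b * t b) + (\sum_a f' a * x a) * (\sum_b g' b * t b).
Proof.
rewrite -!sum_mul_outer -big_split; apply: eq_bigr => a _; rewrite -big_split.
by apply: eq_bigr => b _; rewrite mulrDr mulrDl.
Qed.

Let inspanV D x : inspan (V :\: D) x -> inspan V x.
Proof. exact: inspanS (subsetDl V D). Qed.

Lemma gpr_reduces v : v \in V -> adj G v v = 1 -> reduces_to G [set v] (apply_rule G (Gpr v)).
Proof.
move=> vV vloop; split=> //.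
exists (fun x => scalev (Eform G (basisv v) x) (basisv v) + x); split.
- by move=> x _; rewrite addrK; apply/inspanZ/inspan_basisv/set11.
- move=> x /inspanV xV; apply: perpE_basisv => [|_ /set1P ->].
    by apply: inspanD => //; apply/inspanZ/inspan_basisv.
  rewrite EformDl EformZl Eform_basisv vloop mulr1 (EformC symG xV) ?inspan_basisv //.
  exact: addrr_pchar2 pchar_F2 _.
- move=> x t _; rewrite Eform_adjB sum_mul_outer (oppr_pchar2 pchar_F2).
  by rewrite EformDl EformZl -!Eform_basisvl addrC.
Qed.

Lemma gdr_reduces v1 v2 : v1 \in V -> v2 \in V -> adj G v1 v1 = 0 -> adj G v2 v2 = 0 ->
  adj G v1 v2 = 1 -> reduces_to G [set v1; v2] (apply_rule G (Gdr v1 v2)).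
Proof.
move=> v1V v2V v1loop v2loop v12; have v21 : adj G v2 v1 = 1 by rewrite symG.
split=> //; pose c1 x := Eform G (basisv v1) x; pose c2 x := Eform G (basisv v2) x.
exists (fun x => scalev (c2 x) (basisv v1) + scalev (c1 x) (basisv v2) + x); split.
- move=> x _; rewrite addrK.
  by apply: inspanD; apply/inspanZ/inspan_basisv; rewrite !inE eqxx ?orbT.
- move=> x /inspanV xV; apply: perpE_basisv => [|_ /set2P[]->].
  + by apply: inspanD => //; apply: inspanD; apply/inspanZ/inspan_basisv.
  + rewrite !EformDl !EformZl !Eform_basisv v1loop v21 mulr0 add0r mulr1.
    by rewrite (EformC symG xV) ?inspan_basisv // addrr_pchar2 ?pchar_F2.
  + rewrite !EformDl !EformZl !Eform_basisv v2loop v12 mulr0 addr0 mulr1.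
    by rewrite (EformC symG xV) ?inspan_basisv // addrr_pchar2 ?pchar_F2.
- move=> x t _; rewrite Eform_adjB sum_mul_outerD (oppr_pchar2 pchar_F2).
  rewrite !EformDl !EformZl -!Eform_basisvl addrC.
  by congr (_ + _); rewrite addrC.
Qed.

Lemma gnr_reduces v : v \in V -> (forall w, w \in V -> adj G v w = 0) ->
  reduces_to G [set v] (apply_rule G (Gnr v)).
Proof.
move=> vV visolated; split=> //; exists id; split=> // [x _ | x /inspanV xV].
  by rewrite subrr inspan0.
apply: perpE_basisv => // _ /set1P ->.
rewrite (EformC symG xV) ?inspan_basisv // Eform_basisvl big1 // => b _.
have [bV|/(inspanP _ _ xV)->] := boolP (b \in V); last by rewrite mulr0.
by rewrite visolated ?mul0r.
Qed.

Lemma rule_reduces r : rule_applies G r -> reduces_to G (rule_dom r) (apply_rule G r).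
Proof.
case: r => [v [vV vloop] | v1 v2 [v1V v2V _ [v1loop v2loop] v12] | v [vV _ visolated]].
- exact: gpr_reduces.
- exact: gdr_reduces.
- exact: gnr_reduces.
Qed.

End Rules.

Section Strategy.
Variable T : finType.
Implicit Types (G : graph T) (W : {set T}).

Lemma reducible_isolated G W w : sym_graph G -> W \subset verts G -> reducible G W ->
  w \in W -> (forall w', w' \in W -> adj G w w' = 0) ->
  forall u, u \in verts G -> adj G w u = 0.
Proof.
move=> symG sWV redW wW wW0 u uV.
have [x [y [/inspanP xW /perpEP[yV yperp] eu]]] := redW _ (inspan_basisv uV).
have wV : inspan (verts G) (basisv w) by apply/inspan_basisv/(subsetP sWV).
rewrite -Eform_basisv eu EformDr (EformC symG wV yV) yperp ?inspan_basisv // addr0.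
rewrite Eform_basisvl big1 // => b _.
by have [bW|/xW->] := boolP (b \in W); [rewrite wW0 ?mul0r | rewrite mulr0].
Qed.

Lemma exists_rule G W : sym_graph G -> W \subset verts G -> reducible G W -> W != set0 ->
  exists r, [/\ rule_applies G r, rule_dom r \subset W & rule_dom r != set0].
Proof.
move=> symG sWV redW /set0Pn[w0 w0W]; have inV := subsetP sWV.
have [/exists_inP[w wW wloop] | noloop] := boolP [exists w in W, adj G w w != 0].
  exists (Gpr w); split; rewrite /= ?sub1set -?card_gt0 ?cards1 //.
  by split; [apply: inV | apply: F2_eq1].
have loop0 w : w \in W -> adj G w w = 0.
  by move=> wW; apply/eqP; apply: contraNT noloop => wloop; apply/exists_inP; exists w.
have [/exists_inP[w1 w1W /exists_inP[w2 w2W w12]] | noedge] :=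
  boolP [exists w1 in W, exists w2 in W, adj G w1 w2 != 0].
  have w1w2 : w1 != w2 by apply: contraNneq w12 => <-; rewrite loop0.
  exists (Gdr w1 w2); split=> /=.
  - by split; [apply: inV | apply: inV | apply/eqP | rewrite !loop0 | apply: F2_eq1].
  - by apply/subsetP => d /set2P[]->.
  - by apply/set0Pn; exists w1; rewrite set21.
have edge0 w1 : w1 \in W -> forall w2, w2 \in W -> adj G w1 w2 = 0.
  move=> w1W w2 w2W; apply/eqP; apply: contraNT noedge => w12.
  by apply/exists_inP; exists w1 => //; apply/exists_inP; exists w2.
exists (Gnr w0); split; rewrite /= ?sub1set -?card_gt0 ?cards1 //; split; rewrite ?loop0 ?inV //.
exact: (reducible_isolated symG sWV redW w0W (edge0 w0 w0W)).
Qed.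

Lemma Gamma_set0 G : sym_graph G -> graph_eq G (Gamma G set0).
Proof.
move=> symG; rewrite /Gamma; split=> /= [|u v uV vV]; first by rewrite setD0.
have perp_set0 z : inspan (verts G) z -> perpE G set0 z.
  by move=> zV; apply: perpE_basisv => // d; rewrite inE.
have red0 : reducible G set0.
  by move=> z zV; exists 0, z; rewrite add0r inspan0 perp_set0.
rewrite (EW_perp symG (sub0set _) red0 (inspan_basisv vV) (perp_set0 _ (inspan_basisv uV))).
  by rewrite Eform_basisv.
by rewrite subrr inspan0.
Qed.

Lemma graph_eq_trans G1 G2 G3 : graph_eq G1 G2 -> graph_eq G2 G3 -> graph_eq G1 G3.
Proof. by move=> [e12 a12] [e23 a23]; split=> [|u v uV vV]; rewrite ?e12 // a12 // a23 -?e12. Qed.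

Lemma strategy_domE (r : rule T) s : strategy_dom (r :: s) = rule_dom r :|: strategy_dom s.
Proof. by rewrite /strategy_dom big_cons. Qed.

End Strategy.

Theorem mainTheorem10 (T : finType) (G : graph T) (W : {set T}) :
  sym_graph G -> W \subset verts G -> reducible G W ->
  exists s : seq (rule T),
    [/\ applicable G s, strategy_dom s = W & graph_eq (run G s) (Gamma G W)].
Proof.
move: {2}#|W| (leqnn #|W|) => n.
elim: n G W => [|n IH] G W Wn symG sWV redW; have [->|W0] := eqVneq W set0.
1,3: by exists [::]; split; rewrite /strategy_dom ?big_nil //; apply: Gamma_set0.
  by move: Wn; rewrite leqn0 cards_eq0 (negbTE W0).
have [r [rG rW r0]] := exists_rule symG sWV redW W0.
have [symG' sWV' redW' Gamma_r] := reduces_to_Gamma symG sWV rW redW (rule_reduces symG rG).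
have WDn : (#|W :\: rule_dom r| <= n)%N.
  by rewrite cardsDS // leq_subLR (leq_trans Wn) // -add1n leq_add2r card_gt0.
have [s [sG sW sGamma]] := IH _ _ WDn symG' sWV' redW'.
exists (r :: s); split=> //=; last exact: graph_eq_trans sGamma Gamma_r.
by rewrite strategy_domE sW -{1}(setIidPr rW) setID.
Qed.
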